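(* For every $t>0$ and all finite sets $X,Y,Z\subset\mathbb{R}$, $d^t_{Mag}(X,Y)+d^t_{Mag}(Y,Z)\ge d^t_{Mag}(X,Z)$.
   Context: For a finite set $A\subset\mathbb{R}$ and $t>0$, the matrix $\zeta_{tA}(x,y)=\exp(-t|x-y|)$ ($x,y\in A$) is invertible and $\mathrm{Mag}(tA)=\mathbb{1}^\top\zeta_{tA}^{-1}\mathbb{1}$, with $\mathrm{Mag}(t\emptyset)=0$. The magnitude distance is $d^t_{Mag}(X,Y)=2\,\mathrm{Mag}(t(X\cup Y))-\mathrm{Mag}(tX)-\mathrm{Mag}(tY)$. *)

From HB Require Import structures.
From mathcomp Require Import all_boot all_order all_algebra.
From mathcomp Require Import finmap.
From mathcomp Require Import all_classical all_reals all_analysis.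
Set Implicit Arguments. Unset Strict Implicit. Unset Printing Implicit Defensive.
Import Order.TTheory GRing.Theory Num.Theory.
Local Open Scope ring_scope.

Definition zeta_mx (R : realType) (t : R) (A : {fset R}) : 'M[R]_(size A) :=
  \matrix_(i < size A, j < size A)
     expR (- (t * `|nth 0 (A : seq R) i - nth 0 (A : seq R) j|)).

(* Mag(tA) = 1^T zeta^{-1} 1 ; the empty sum gives Mag(t emptyset) = 0. *)
Definition Mag (R : realType) (t : R) (A : {fset R}) : R :=
  \sum_(i < size A) \sum_(j < size A) invmx (zeta_mx t A) i j.

Definition dMag (R : realType) (t : R) (X Y : {fset R}) : R :=
  2 * Mag t (fsetU X Y) - Mag t X - Mag t Y.

From HB Require Import structures.
From mathcomp Require Import all_boot all_order all_algebra.
From mathcomp Require Import finmap.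
From mathcomp Require Import all_classical all_reals all_analysis.
From mathcomp Require Import ring lra.
Import Order.TTheory GRing.Theory Num.Theory.
Local Open Scope fset_scope.
Local Open Scope ring_scope.
Set Implicit Arguments. Unset Strict Implicit. Unset Printing Implicit Defensive.

(* In dimension one the magnitude has a closed form.  Write q_A^-(b), q_A^+(b)
   for the similarities exp(-t d) of b to its nearest neighbours in A on the
   left and on the right (0 when there is none) and phi u = (1 - u) / (1 + u).
   Then w_A(b) = (phi q_A^-(b) + phi q_A^+(b)) / 2 solves zeta w = 1 and zeta
   is invertible, both by eliminating the leftmost point, so
   Mag(tA) = sum_b w_A(b).  Adding a new point b to A increases this sum by
   gain(p, q) = phi p + phi q - phi (p q),  p = q_A^-(b),  q = q_A^+(b),
   which is nonnegative and decreasing in p and q on [0, 1].  Enlarging A can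
   only bring the neighbours of b closer, so A |-> Mag(tA) is increasing with
   diminishing returns, hence Mag(X u Z) + Mag(Y) <= Mag(X u Y) + Mag(Y u Z);
   this is the triangle inequality after cancellation. *)

Lemma bigmax_seq_attained d (T : orderType d) (I : eqType) (r : seq I)
    (P : pred I) (F : I -> T) (x0 : T) :
  \big[Order.max/x0]_(i <- r | P i) F i = x0 \/
  exists2 i, (i \in r) && P i & \big[Order.max/x0]_(i <- r | P i) F i = F i.
Proof.
rewrite big_seq_cond; elim/big_ind: _ => [|u v Hu Hv|i Pi]; first by left.
  by rewrite maxEle; case: ifP.
by right; exists i.
Qed.

Lemma lt_sorted_cons d (T : porderType d) (m : T) (s : seq T) :
  sorted <%O (m :: s) -> {in s, forall y, m < y}%O /\ sorted <%O s.
Proof. by rewrite /= (path_sortedE lt_trans) => /andP[/allP]. Qed.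

Section DiminishingReturns.
Variables (T : choiceType) (R : realDomainType) (f : {fset T} -> R).
Hypothesis f_fsetU1_ge : forall A b, f A <= f (b |` A).
Hypothesis f_incr_le : forall A B b, A `<=` B -> f (b |` B) - f B <= f (b |` A) - f A.

Lemma le_f_fsetU A C : f A <= f (A `|` C).
Proof.
elim/fset1U_rect: C => [|b C _ IH]; first by rewrite fsetU0.
by rewrite fsetUCA; exact: le_trans IH (f_fsetU1_ge _ _).
Qed.

Lemma f_incr_le_fsetU A B C : A `<=` B -> f (B `|` C) - f B <= f (A `|` C) - f A.
Proof.
move=> AB; elim/fset1U_rect: C => [|b C _ IH]; first by rewrite !fsetU0 !subrr.
rewrite (fsetUCA B) (fsetUCA A); have := f_incr_le b (fsetSU C AB); lra.
Qed.

Lemma f_submodular X Y Z : f (X `|` Z) + f Y <= f (X `|` Y) + f (Y `|` Z).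
Proof.
have := le_f_fsetU (X `|` Z) Y; have := f_incr_le_fsetU Z (fsubsetUr X Y).
rewrite fsetUAC; lra.
Qed.

End DiminishingReturns.

Section Gain.
Variable R : realFieldType.
Implicit Types p q : R.

Definition phi q := (1 - q) / (1 + q).

Definition gain p q := phi p + phi q - phi (p * q).

Lemma phi0 : phi 0 = 1.
Proof. by rewrite /phi subr0 addr0 divr1. Qed.

Lemma gainC p q : gain p q = gain q p.
Proof. by rewrite /gain mulrC (addrC (phi p)). Qed.

Lemma gain_antil p p' q : 0 <= p -> p <= p' -> p' <= 1 -> 0 <= q -> q <= 1 ->
  gain p' q <= gain p q.
Proof.
move=> p0 pp' p'1 q0 q1; rewrite -subr_ge0.
have p'0 : 0 <= p' := le_trans p0 pp'.
have pq0 : 0 <= p * q := mulr_ge0 p0 q0.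
have p'q0 : 0 <= p' * q := mulr_ge0 p'0 q0.
have pp'q1 : p * p' * q <= 1.
  by rewrite !mulr_ile1 ?mulr_ge0 //; exact: le_trans p'1.
have -> : gain p q - gain p' q = 2 * (p' - p) * (1 - q) * (1 - p * p' * q) /
    ((1 + p) * (1 + p') * (1 + p * q) * (1 + p' * q)).
  by rewrite /gain /phi; field; apply/and5P; split; rewrite gt_eqF //; lra.
by apply: divr_ge0; rewrite ?mulr_ge0 //; lra.
Qed.

Lemma gain_ge0 p q : 0 <= p -> p <= 1 -> 0 <= q -> q <= 1 -> 0 <= gain p q.
Proof.
move=> p0 p1 q0 q1; have := gain_antil p0 p1 (lexx 1) q0 q1.
by rewrite /gain mul1r /phi subrr mul0r add0r subrr.
Qed.

End Gain.

Section Similarity.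
Variables (R : realType) (t : R).
Hypothesis t_gt0 : 0 < t.
Implicit Types (a b c m x y : R) (s : seq R).

Definition sim x y := expR (- (t * `|x - y|)).

Lemma sim_gt0 x y : 0 < sim x y.
Proof. exact: expR_gt0. Qed.

Lemma sim_ge0 x y : 0 <= sim x y.
Proof. exact/ltW/sim_gt0. Qed.

Lemma simxx x : sim x x = 1.
Proof. by rewrite /sim subrr normr0 mulr0 oppr0 expR0. Qed.

Lemma simC x y : sim x y = sim y x.
Proof. by rewrite /sim distrC. Qed.

Lemma sim_opp x y : sim (- x) (- y) = sim x y.
Proof. by rewrite /sim -opprD normrN. Qed.

Lemma sim_le1 x y : sim x y <= 1.
Proof. by rewrite /sim -expR0 ler_expR oppr_le0 mulr_ge0 // ltW. Qed.

Lemma sim_lt1 x y : x != y -> sim x y < 1.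
Proof.
by move=> xy; rewrite /sim -expR0 ltr_expR oppr_lt0 mulr_gt0 // normr_gt0 subr_eq0.
Qed.

Lemma sim_mul x y z : x <= y -> y <= z -> sim x z = sim x y * sim y z.
Proof.
move=> xy yz; rewrite /sim -expRD !ler0_norm ?subr_le0 ?(le_trans xy) //.
by congr expR; ring.
Qed.

Lemma ler_sim_l a b x : a <= b -> b <= x -> sim a x <= sim b x.
Proof. by move=> ab bx; rewrite (sim_mul ab bx) ler_piMl ?sim_ge0 ?sim_le1. Qed.

Lemma ler_sim_r x a b : x <= a -> a <= b -> sim x b <= sim x a.
Proof. by move=> xa ab; rewrite (sim_mul xa ab) ler_piMr ?sim_ge0 ?sim_le1. Qed.

Lemma ltr_sim_r x a b : x <= a -> a < b -> sim x b < sim x a.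
Proof.
by move=> xa ab; rewrite (sim_mul xa (ltW ab)) gtr_pMr ?sim_gt0 // sim_lt1 // lt_eqF.
Qed.

(* As [sim] decreases with distance, [simL s x] is the similarity of [x] to its
   nearest neighbour in [s] on the left, and 0 if there is none. *)
Definition simL s x := \big[Order.max/0]_(a <- s | a < x) sim a x.
Definition simR s x := \big[Order.max/0]_(a <- s | x < a) sim x a.

Lemma simL_ge0 s x : 0 <= simL s x.
Proof. exact: bigmax_ge_id. Qed.

Lemma simR_ge0 s x : 0 <= simR s x.
Proof. exact: bigmax_ge_id. Qed.

Lemma simL_le1 s x : simL s x <= 1.
Proof. by apply: bigmax_le => // a _; exact: sim_le1. Qed.

Lemma simR_le1 s x : simR s x <= 1.
Proof. by apply: bigmax_le => // a _; exact: sim_le1. Qed.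

Lemma simL_ub s x a : a \in s -> a < x -> sim a x <= simL s x.
Proof. exact: le_bigmax_seq. Qed.

Lemma simR_ub s x a : a \in s -> x < a -> sim x a <= simR s x.
Proof. exact: le_bigmax_seq. Qed.

Lemma simR_le s x B : 0 <= B -> {in s, forall a, x < a -> sim x a <= B} ->
  simR s x <= B.
Proof.
by move=> B0 sB; rewrite /simR big_seq_cond bigmax_le // => a /andP[]; exact: sB.
Qed.

Lemma simL_sub s1 s2 x : {subset s1 <= s2} -> simL s1 x <= simL s2 x.
Proof. exact: sub_bigmax_seq. Qed.

Lemma simR_sub s1 s2 x : {subset s1 <= s2} -> simR s1 x <= simR s2 x.
Proof. exact: sub_bigmax_seq. Qed.

Lemma simL_cons a s x :
  simL (a :: s) x = if a < x then Order.max (sim a x) (simL s x) else simL s x.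
Proof. by rewrite /simL big_cons. Qed.

Lemma simR_cons a s x :
  simR (a :: s) x = if x < a then Order.max (sim x a) (simR s x) else simR s x.
Proof. by rewrite /simR big_cons. Qed.

Lemma simL_eq0 s x : {in s, forall a, x <= a} -> simL s x = 0.
Proof.
move=> sx; rewrite /simL big_seq_cond big_pred0 // => a.
by apply/andP => -[/sx]; rewrite leNgt => /negbTE->.
Qed.

Lemma simR_opp s x : simR s x = simL (map -%R s) (- x).
Proof.
rewrite /simR /simL big_map; apply: eq_big => [a|a _]; first by rewrite /= ltrN2.
by rewrite sim_opp simC.
Qed.

Lemma simL_opp s x : simL s x = simR (map -%R s) (- x).
Proof. by rewrite simR_opp -map_comp opprK (eq_map opprK) map_id. Qed.

Definition weight s x := (phi (simL s x) + phi (simR s x)) / 2.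

Lemma weight_eq_mem s1 s2 : s1 =i s2 -> weight s1 =1 weight s2.
Proof.
move=> s12 x; have sub21 : {subset s2 <= s1} by move=> a; rewrite s12.
have sub12 : {subset s1 <= s2} by move=> a; rewrite s12.
rewrite /weight; congr ((phi _ + phi _) / 2); apply/le_anti.
  by rewrite !simL_sub.
by rewrite !simR_sub.
Qed.

Lemma sim_sorted_head m c r : sorted <%R [:: m, c & r] ->
  {in c :: r, forall x, sim m x = sim m c * sim c x}.
Proof.
case/lt_sorted_cons=> m_lt /lt_sorted_cons[c_lt _] x.
rewrite inE => /predU1P[->|/c_lt cx]; first by rewrite simxx mulr1.
by rewrite (sim_mul (ltW (m_lt c (mem_head _ _))) (ltW cx)).
Qed.

Lemma weight_sorted_head m c r : sorted <%R [:: m, c & r] ->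
  weight [:: m, c & r] m = (1 + sim m c)^-1.
Proof.
case/lt_sorted_cons=> m_lt /lt_sorted_cons[c_lt _].
have mc : m < c := m_lt c (mem_head _ _).
rewrite /weight.
have -> : simL [:: m, c & r] m = 0.
  by apply: simL_eq0 => a; rewrite inE => /predU1P[->|/m_lt/ltW].
have -> : simR [:: m, c & r] m = sim m c.
  rewrite !simR_cons ltxx mc max_l //; apply: simR_le => [|a /c_lt ca _].
    exact: sim_ge0.
  exact: ler_sim_r (ltW mc) (ltW ca).
rewrite phi0 /phi; field.
by rewrite gt_eqF // ltr_wpDr ?sim_ge0.
Qed.

Lemma weight_sorted_second m c r : sorted <%R [:: m, c & r] ->
  weight [:: m, c & r] c = weight (c :: r) c - sim m c / (1 + sim m c).
Proof.
case/lt_sorted_cons=> m_lt /lt_sorted_cons[c_lt _].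
have mc : m < c := m_lt c (mem_head _ _).
have simL_c : simL (c :: r) c = 0.
  by apply: simL_eq0 => a; rewrite inE => /predU1P[->|/c_lt/ltW].
rewrite /weight simL_cons mc simL_c max_l ?sim_ge0 // simR_cons ltNge (ltW mc) /=.
set pR := phi (simR _ _); rewrite phi0 /phi; field.
by rewrite gt_eqF // ltr_wpDr ?sim_ge0.
Qed.

Lemma weight_sorted_tail m c r : sorted <%R [:: m, c & r] ->
  {in r, weight [:: m, c & r] =1 weight (c :: r)}.
Proof.
case/lt_sorted_cons=> m_lt /lt_sorted_cons[c_lt _] y ry.
have mc : m < c := m_lt c (mem_head _ _).
have cy : c < y := c_lt y ry.
have my : m < y := lt_trans mc cy.
rewrite /weight simR_cons ltNge (ltW my) /= simL_cons my max_r //.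
apply: le_trans (ler_sim_l (ltW mc) (ltW cy)) _.
exact: simL_ub (mem_head _ _) cy.
Qed.

Lemma sum_sim_weight_cons m c r x : sorted <%R [:: m, c & r] ->
  \sum_(b <- [:: m, c & r]) sim x b * weight [:: m, c & r] b =
  \sum_(b <- c :: r) sim x b * weight (c :: r) b +
    (sim x m - sim m c * sim x c) / (1 + sim m c).
Proof.
move=> mcr_sorted; rewrite !big_cons (weight_sorted_head mcr_sorted).
rewrite (weight_sorted_second mcr_sorted).
rewrite (eq_big_seq _ (fun b rb => congr1 _ (weight_sorted_tail mcr_sorted rb))) /=.
field; by rewrite gt_eqF // ltr_wpDr ?sim_ge0.
Qed.

Lemma sum_sim_weight_sorted s : sorted <%R s ->
  {in s, forall x, \sum_(b <- s) sim x b * weight s b = 1}.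
Proof.
elim: s => // m [|c r] IH mcr_sorted x.
  rewrite mem_seq1 => /eqP->; rewrite big_seq1 simxx mul1r /weight.
  by rewrite /simL /simR !big_cons !big_nil ltxx /= phi0; field.
have [_ cr_sorted] := lt_sorted_cons mcr_sorted.
have sim_m := sim_sorted_head mcr_sorted.
rewrite sum_sim_weight_cons // inE => /predU1P[->|xcr].
  have -> : \sum_(b <- c :: r) sim m b * weight (c :: r) b = sim m c.
    rewrite (eq_big_seq _ (fun b cb => congr1 (fun y => y * _) (sim_m b cb))).
    rewrite -[RHS]mulr1 -(IH cr_sorted c (mem_head _ _)) big_distrr /=.
    by apply: eq_bigr => b _; rewrite mulrA.
  rewrite simxx; field; by rewrite gt_eqF // ltr_wpDr ?sim_ge0.
by rewrite (simC x m) sim_m // (simC c x) subrr mul0r addr0 IH.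
Qed.

Lemma sim_free_sorted s (u : R -> R) : sorted <%R s ->
  {in s, forall x, \sum_(b <- s) u b * sim b x = 0} -> {in s, forall b, u b = 0}.
Proof.
elim: s u => // m [|c r] IH u mcr_sorted u_eq0 b.
  rewrite mem_seq1 => /eqP->; have := u_eq0 m (mem_head _ _).
  by rewrite big_seq1 simxx mulr1.
have [m_lt /[dup] cr_sorted /lt_sorted_cons[c_lt _]] := lt_sorted_cons mcr_sorted.
have sim_m := sim_sorted_head mcr_sorted.
have r_neq_c : {in r, forall y, (y == c) = false}.
  by move=> y /c_lt; rewrite lt_def => /andP[/negbTE].
set q := sim m c.
(* Eliminate [m]: on [c :: r], [sim m x = q * sim c x] (sim_sorted_head). *)
pose u' y := if y == c then u c + q * u m else u y.
have u'_eq0 : {in c :: r, forall y, u' y = 0}.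
  apply: IH => // x cx; rewrite big_cons /u' eqxx.
  rewrite (eq_big_seq (fun j => u j * sim j x)) => [|j /r_neq_c -> //].
  have /u_eq0 : x \in [:: m, c & r] by rewrite inE cx orbT.
  by rewrite !big_cons sim_m // => h; rewrite -[RHS]h /q; ring.
have u_r : {in r, forall y, u y = 0}.
  by move=> y ry; have := u'_eq0 y; rewrite /u' r_neq_c // inE ry orbT => ->.
have u_c : u c = - (q * u m).
  apply/eqP; rewrite -addr_eq0.
  by have := u'_eq0 c (mem_head _ _); rewrite /u' eqxx => ->.
have q_lt1 : q < 1 by rewrite sim_lt1 // lt_eqF // m_lt ?mem_head.
have u_m : u m = 0.
  have := u_eq0 m (mem_head _ _); rewrite !big_cons big1_seq => [|y /andP[_ /u_r->]].
    rewrite simxx (simC c m) -/q u_c addr0 => h.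
    have /eqP : u m * (1 - q * q) = 0 by rewrite -[RHS]h; ring.
    rewrite mulf_eq0 subr_eq0 => /orP[/eqP //|/eqP qq1].
    by have := sim_ge0 m c; rewrite -/q; nra.
  by rewrite mul0r.
rewrite !inE => /predU1P[->//|/predU1P[->|/u_r//]].
by rewrite u_c u_m mulr0 oppr0.
Qed.

Lemma sum_sim_weight s : uniq s ->
  {in s, forall x, \sum_(b <- s) sim x b * weight s b = 1}.
Proof.
move=> s_uniq x xs; have s_perm := permEl (perm_sort <=%R s).
rewrite -(perm_big _ s_perm) /=.
under eq_bigr do rewrite -(weight_eq_mem (perm_mem s_perm)).
by apply: sum_sim_weight_sorted; rewrite ?sort_lt_sorted ?mem_sort.
Qed.

Lemma sim_free s (u : R -> R) : uniq s ->
  {in s, forall x, \sum_(b <- s) u b * sim b x = 0} -> {in s, forall b, u b = 0}.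
Proof.
move=> s_uniq u_eq0 b bs; have s_perm := permEl (perm_sort <=%R s).
apply: (@sim_free_sorted (sort <=%R s)); rewrite ?sort_lt_sorted ?mem_sort //.
by move=> x; rewrite mem_sort (perm_big _ s_perm); exact: u_eq0.
Qed.

Lemma zeta_mx_unit (A : {fset R}) : zeta_mx t A \in unitmx.
Proof.
rewrite -row_free_unit; apply: inj_row_free => v vZ0.
(* [u] reads the coordinates of [v] off the points of [A]. *)
pose u b := \sum_(i < size A | nth 0 A i == b) v 0 i.
have uE (i : 'I_(size A)) : u (nth 0 A i) = v 0 i.
  by rewrite /u (big_pred1 i) // => j /=; rewrite nth_uniq ?fset_uniq.
have u_eq0 : {in A, forall b, u b = 0}.
  apply: sim_free (fset_uniq A) _ => x xA.
  have xA' : (index x A < size A)%N by rewrite index_mem.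
  move/rowP: vZ0 => /(_ (Ordinal xA')).
  rewrite !mxE (big_nth 0) big_mkord => vZ0x.
  rewrite -[RHS]vZ0x; apply: eq_bigr => i _.
  by rewrite uE mxE /= nth_index.
by apply/rowP => i; rewrite mxE -uE u_eq0 ?mem_nth.
Qed.

Lemma Mag_weight (A : {fset R}) : Mag t A = \sum_(b <- A) weight A b.
Proof.
pose W := \col_(i < size A) weight A (nth 0 A i).
have ZW : zeta_mx t A *m W = const_mx 1.
  apply/colP => i; rewrite !mxE.
  rewrite -(sum_sim_weight (fset_uniq A) (mem_nth 0 (ltn_ord i))).
  by rewrite (big_nth 0) big_mkord; apply: eq_bigr => j _; rewrite !mxE.
have /matrixP IW : invmx (zeta_mx t A) *m const_mx 1 = W.
  by rewrite -ZW mulKmx // zeta_mx_unit.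
rewrite /Mag (big_nth 0) big_mkord; apply: eq_bigr => i _.
by have := IW i 0; rewrite !mxE => <-; apply: eq_bigr => j _; rewrite mxE mulr1.
Qed.

Lemma simL_through s b c : b <= c -> {in s, forall a, a < c -> a < b} ->
  simL s c = simL s b * sim b c.
Proof.
move=> bc s_lt; rewrite /simL.
have maxM u v : Order.max u v * sim b c = Order.max (u * sim b c) (v * sim b c).
  exact/maxr_pMl/sim_ge0.
rewrite (big_morph (fun v => v * sim b c) maxM (mul0r _)) big_seq_cond [RHS]big_seq_cond.
apply: eq_big => [a|a /andP[sa /(s_lt a sa) ab]].
  apply/andP/andP => -[sa ac]; split => //; first exact: s_lt.
  exact: lt_le_trans bc.
by rewrite -sim_mul // ltW.
Qed.

Lemma sum_phi_simL_cons s b : uniq s -> b \notin s ->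
  \sum_(x <- s) (phi (simL (b :: s) x) - phi (simL s x)) =
  phi (simR s b) - phi (simL s b * simR s b).
Proof.
move=> s_uniq bs.
(* Only the successor [c] of [b] in [s] acquires a nearer left neighbour. *)
have := bigmax_seq_attained s (fun a => b < a) (sim b) 0.
rewrite -/(simR s b) => -[simR0|[c /andP[cs bc] simRc]].
  rewrite simR0 mulr0 subrr big1_seq // => x /andP[_ xs].
  rewrite simL_cons; case: ifP => [bx|_]; last by rewrite subrr.
  by have := simR_ub xs bx; rewrite simR0 leNgt sim_gt0.
have succ : {in s, forall a, b < a -> c <= a}.
  move=> a sa ba; rewrite leNgt; apply/negP => ac.
  by have := simR_ub sa ba; rewrite simRc leNgt ltr_sim_r // ltW.
have s_lt : {in s, forall a, a < c -> a < b}.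
  move=> a sa ac; rewrite ltNge le_eqVlt; apply/negP => /predU1P[ba|/(succ a sa)].
    by move: bs; rewrite ba sa.
  by rewrite leNgt ac.
rewrite (bigD1_seq c) //= big1_seq => [|x /andP[xc xs]].
  rewrite simL_cons bc (simL_through (ltW bc) s_lt) simRc max_l ?addr0 //.
  by rewrite ler_piMl ?sim_ge0 ?simL_le1.
rewrite simL_cons; case: ifP => [bx|_]; last by rewrite subrr.
have cx : c < x by rewrite lt_neqAle eq_sym xc succ.
rewrite max_r ?subrr //; apply: le_trans (ler_sim_l (ltW bc) (ltW cx)) _.
exact: simL_ub.
Qed.

Lemma sum_phi_simR_cons s b : uniq s -> b \notin s ->
  \sum_(x <- s) (phi (simR (b :: s) x) - phi (simR s x)) =
  phi (simL s b) - phi (simL s b * simR s b).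
Proof.
move=> s_uniq bs; under eq_bigr do rewrite !simR_opp.
rewrite -(big_map -%R xpredT
  (fun y => phi (simL (map -%R (b :: s)) y) - phi (simL (map -%R s) y))).
rewrite sum_phi_simL_cons ?map_inj_uniq ?mem_map //; try exact: oppr_inj.
by rewrite -simR_opp -simL_opp mulrC.
Qed.

Lemma sum_weight_cons s b : uniq s -> b \notin s ->
  \sum_(x <- b :: s) weight (b :: s) x =
  \sum_(x <- s) weight s x + gain (simL s b) (simR s b).
Proof.
move=> s_uniq bs; rewrite big_cons.
have -> : weight (b :: s) b = weight s b by rewrite /weight simL_cons simR_cons ltxx.
have weight_cons x : weight (b :: s) x =
    weight s x + (phi (simL (b :: s) x) - phi (simL s x)) / 2
               + (phi (simR (b :: s) x) - phi (simR s x)) / 2.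
  by rewrite /weight; field.
rewrite (eq_bigr _ (fun x _ => weight_cons x)).
rewrite !big_split /= -!mulr_suml sum_phi_simL_cons // sum_phi_simR_cons //.
by rewrite /weight /gain; field.
Qed.

Lemma Mag_fsetU1 (A : {fset R}) b : b \notin A ->
  Mag t (b |` A) = Mag t A + gain (simL A b) (simR A b).
Proof.
move=> bA; have bA_perm : perm_eq (b |` A) (b :: A).
  by apply: uniq_perm; rewrite /= ?bA ?fset_uniq // => x; rewrite !inE.
rewrite !Mag_weight -sum_weight_cons ?fset_uniq // (perm_big _ bA_perm) /=.
by apply: eq_bigr => x _; apply: weight_eq_mem; exact: perm_mem.
Qed.

Lemma Mag_fsetU1_ge (A : {fset R}) b : Mag t A <= Mag t (b |` A).
Proof.
have [bA|bA] := boolP (b \in A).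
  by have /fsetUidPr-> : [fset b] `<=` A by rewrite fsub1set.
by rewrite Mag_fsetU1 // lerDl gain_ge0 ?simL_ge0 ?simL_le1 ?simR_ge0 ?simR_le1.
Qed.

Lemma Mag_fsetU1_incr_le (A B : {fset R}) b : A `<=` B ->
  Mag t (b |` B) - Mag t B <= Mag t (b |` A) - Mag t A.
Proof.
move=> AB; have [bB|bB] := boolP (b \in B).
  have /fsetUidPr-> : [fset b] `<=` B by rewrite fsub1set.
  by rewrite subrr subr_ge0 Mag_fsetU1_ge.
have bA : b \notin A by apply: contra bB; exact: (fsubsetP AB).
rewrite !Mag_fsetU1 // !(addrC (Mag t _)) !addrK.
have subAB : {subset A <= B} := fsubsetP AB.
apply: le_trans (gain_antil (simL_ge0 A b) (simL_sub b subAB) (simL_le1 B b)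
  (simR_ge0 B b) (simR_le1 B b)) _.
rewrite gainC [X in _ <= X]gainC.
exact: gain_antil (simR_ge0 A b) (simR_sub b subAB) (simR_le1 B b)
  (simL_ge0 A b) (simL_le1 A b).
Qed.

End Similarity.

Unset Implicit Arguments.

Theorem propositionB7 (R : realType) (t : R) (X Y Z : {fset R}) :
  0 < t -> dMag t X Y + dMag t Y Z >= dMag t X Z.
Proof.
move=> t_gt0; rewrite /dMag.
have := f_submodular (Mag_fsetU1_ge t_gt0) (Mag_fsetU1_incr_le t_gt0) X Y Z.
lra.
Qed.
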